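(* Let $S$ be a finite simple semigroup satisfying the quasi-identities $$\forall a\,\forall b\,\forall \alpha\,\forall\beta\ \big((a\alpha=a\beta)\to(b\alpha=b\beta)\big),\qquad \forall a\,\forall b\,\forall \alpha\,\forall\beta\ \big((\alpha a=\beta a)\to(\alpha b=\beta b)\big).$$ Then $S$ is a rectangular band of groups.
   Context: A semigroup is simple if its only two-sided ideal is itself. By the Sushkevich–Rees theorem, every finite simple semigroup is isomorphic to some $(G,P,\Lambda,I)$: the set of triples $(\lambda,g,i)$ with $g$ in a finite group $G$, $\lambda\in\Lambda$, $i\in I$ ($\Lambda,I$ finite), with multiplication $(\lambda,g,i)(\mu,h,j)=(\lambda,g\,p_{i\mu}h,j)$, where $P=(p_{i\mu})$ is an $|I|\times|\Lambda|$ matrix over $G$ whose first row and first column consist of $1$. A semigroup is a rectangular band of groups if it is isomorphic to such a $(G,P,\Lambda,I)$ with $p_{i\lambda}=1$ for all $i\in I,\lambda\in\Lambda$. *)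

From mathcomp Require Import all_boot all_fingroup.
Set Implicit Arguments. Unset Strict Implicit. Unset Printing Implicit Defensive.

Local Open Scope group_scope.

Definition is_ideal (T : finType) (mul : T -> T -> T) (A : {set T}) : Prop :=
  A != set0 /\ (forall x y : T, y \in A -> (mul x y \in A) /\ (mul y x \in A)).

Definition simple_semigroup (T : finType) (mul : T -> T -> T) : Prop :=
  forall A : {set T}, is_ideal mul A -> A = [set: T].

(* Rees matrix semigroup (G, P, Λ, I): triples (λ, g, i) with
   (λ,g,i)(μ,h,j) = (λ, g p_{iμ} h, j). *)
Definition rees_mul (G : finGroupType) (Lam I : finType) (P : I -> Lam -> G)
  (x y : Lam * G * I) : Lam * G * I :=
  let: (l, g, i) := x in let: (m, h, j) := y in (l, g * P i m * h, j).

Definition rectangular_band_of_groups (T : finType) (mul : T -> T -> T) : Prop :=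
  exists (G : finGroupType) (Lam I : finType) (f : T -> Lam * G * I),
    bijective f /\
    forall x y : T, f (mul x y) = rees_mul (fun (_ : I) (_ : Lam) => (1 : G)) (f x) (f y).

From mathcomp Require Import all_boot all_fingroup zify.
Set Implicit Arguments. Unset Strict Implicit. Unset Printing Implicit Defensive.

(* Every finite semigroup has an idempotent e, and the two quasi-identities
   make it a middle unit: x e y = x y.  Hence z |-> z x e permutes the left
   ideal S e, and x |-> psi x is a homomorphism from S onto a finite group G
   of permutations.  Inverses in G together with simplicity show that x S and
   S x do not change under right, resp. left, multiplication, so
   x |-> (x S, psi x, S x) is a homomorphism onto a rectangular band of
   groups.  It is injective because psi x determines e x e, which together
   with x S determines x e, dually S x determines e x, and x e, e x determine
   x; it is onto because G is a group. *)

Lemma exists_idempotent (T : finType) (mul : T -> T -> T) :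
  associative mul -> T -> exists e, mul e e = e.
Proof.
(* [pw n] is x^(n+1); the idempotent is x^(p (i+2)), a power past the
   preperiod i whose exponent is a multiple of the period p. *)
move=> mulA x; pose pw n := iter n (mul x) x.
have pwD m n : pw (m + n).+1 = mul (pw m) (pw n).
  elim: m => [|m IH]; first by rewrite add0n.
  by rewrite addSn -[pw _.+2]/(mul x (pw (m + n).+1)) IH mulA.
have [i [p [p_gt0 pw_per]]] : exists i p, 0 < p /\ pw (i + p) = pw i.
  have /injectivePn[a [b neq_ab eq_ab]] : ~~ injectiveb (fun k : 'I_#|T|.+1 => pw k).
    by apply/injectiveP => /leq_card; rewrite card_ord ltnn.
  case: (ltngtP a b) => [lt_ab | lt_ba | /val_inj eq_ab']; last first.
  - by rewrite eq_ab' eqxx in neq_ab.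
  - by exists b, (a - b); rewrite subnKC ?subn_gt0 ?(ltnW lt_ba).
  - by exists a, (b - a); rewrite subnKC ?subn_gt0 ?(ltnW lt_ab).
have pw_perX m k : i < m -> pw (m + k * p) = pw m.
  move=> lt_im; elim: k => [|k IH]; first by rewrite addn0.
  have -> : m + k.+1 * p = ((i + p) + (m + k * p - i.+1)).+1 by lia.
  by rewrite pwD pw_per -pwD -IH; congr pw; lia.
exists (pw (p * i.+2).-1); rewrite -pwD.
have -> : ((p * i.+2).-1 + (p * i.+2).-1).+1 = (p * i.+2).-1 + i.+2 * p by nia.
by rewrite pw_perX //; nia.
Qed.

Section MiddleUnit.

Variables (T : finType) (mul : T -> T -> T).
Hypothesis mulA : associative mul.
Hypothesis left_uniform : forall a b x y, mul a x = mul a y -> mul b x = mul b y.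
Hypothesis right_uniform : forall a b x y, mul x a = mul y a -> mul x b = mul y b.
Variable e : T.
Hypothesis ee : mul e e = e.

Lemma mul_midr x y : mul x (mul e y) = mul x y.
Proof. by apply: (left_uniform (a := e)); rewrite mulA ee. Qed.

Lemma mul_midl x y : mul (mul x e) y = mul x y.
Proof. by apply: (right_uniform (a := e)); rewrite -mulA ee. Qed.

(* The identity off the left ideal [S e], so that it permutes all of T. *)
Definition rmul_fun x z := if mul z e == z then mul (mul z x) e else z.

Lemma rmul_fun_inj x : injective (rmul_fun x).
Proof.
move=> z z'; rewrite /rmul_fun.
case: eqP => ze; case: eqP => z'e eq_zz'.
- by rewrite -ze -z'e; apply: (right_uniform (a := mul x e)); rewrite !mulA.
- by case: z'e; rewrite -eq_zz' -mulA ee.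
- by case: ze; rewrite eq_zz' -mulA ee.
- exact: eq_zz'.
Qed.

Definition rmul_perm x : {perm T} := perm (@rmul_fun_inj x).

Lemma rmul_permE x z : rmul_perm x z = rmul_fun x z.
Proof. exact: permE. Qed.

Lemma rmul_perm_idem x : rmul_perm x e = mul (mul e x) e.
Proof. by rewrite rmul_permE /rmul_fun ee eqxx. Qed.

Lemma rmul_permM x y : rmul_perm (mul x y) = (rmul_perm x * rmul_perm y)%g.
Proof.
apply/permP => z; rewrite permM !rmul_permE /rmul_fun.
have [ze | zNe] := eqVneq (mul z e) z; last by rewrite (negbTE zNe).
by rewrite -[mul (mul _ e) e]mulA ee eqxx mul_midl mulA.
Qed.

Lemma rmul_perm1 : rmul_perm e = 1%g.
Proof.
apply/permP => z; rewrite rmul_permE perm1 /rmul_fun.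
by case: eqP => // ze; rewrite -mulA ee ze.
Qed.

Lemma group_set_rmul_perm : group_set [set rmul_perm x | x : T].
Proof.
apply/group_setP; split; first by apply/imsetP; exists e; rewrite ?rmul_perm1.
move=> _ _ /imsetP[x _ ->] /imsetP[y _ ->].
by apply/imsetP; exists (mul x y); rewrite ?rmul_permM.
Qed.

Definition rmul_group : {group {perm T}} := Group group_set_rmul_perm.

Lemma rmul_perm_in x : rmul_perm x \in rmul_group.
Proof. by apply/imsetP; exists x. Qed.

Lemma rmul_perm_onto g : g \in rmul_group -> exists x, rmul_perm x = g.
Proof. by case/imsetP => x _ ->; exists x. Qed.

Lemma exists_rmul_perm_inv y : exists d, rmul_perm (mul y d) = 1%g.
Proof.
have [d yd] := rmul_perm_onto (groupVr (rmul_perm_in y)).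
by exists d; rewrite rmul_permM yd mulgV.
Qed.

Lemma rmul_perm1_mid z x y : rmul_perm z = 1%g -> mul (mul x z) y = mul x y.
Proof.
move=> z1; have eze : mul (mul e z) e = e by rewrite -rmul_perm_idem z1 perm1.
have -> : mul x y = mul (mul x (mul (mul e z) e)) y by rewrite eze mul_midl.
by rewrite [mul x (mul _ _)]mulA mul_midl mul_midr.
Qed.

Definition rclass x := [set mul x s | s : T].

Lemma rclass_mulr x y : rclass (mul x y) = rclass x.
Proof.
have [d yd] := exists_rmul_perm_inv y.
apply/setP => z; apply/imsetP/imsetP => [[s _ ->] | [s _ ->]].
  by exists (mul y s); rewrite ?mulA.
by exists (mul d s); rewrite // mulA -(rmul_perm1_mid _ _ yd) !mulA.
Qed.

Lemma rclass_mule_eq x y :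
  rclass x = rclass y -> mul (mul e x) e = mul (mul e y) e -> mul x e = mul y e.
Proof.
move=> xy exe; have /imsetP[s _ xe] : mul x e \in rclass y.
  by rewrite -xy; apply/imsetP; exists e.
rewrite xe; apply: (left_uniform (a := mul e y)).
by rewrite -!mulA -xe mulA exe mulA.
Qed.

Hypothesis simpleS : simple_semigroup mul.

Lemma exists_sandwich x : exists u v, x = mul (mul u x) v.
Proof.
pose A := [set z | [exists u, exists v, z == mul (mul u x) v]].
have idealA : is_ideal mul A.
  split.
    by apply/set0Pn; exists (mul (mul x x) x); rewrite inE; apply/existsP; exists x;
      apply/existsP; exists x.
  move=> z y; rewrite !inE => /existsP[u /existsP[v /eqP ->]].
  by split; apply/existsP; [exists (mul z u) | exists u]; apply/existsP;
    [exists v | exists (mul v z)]; rewrite !mulA.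
have : x \in A by rewrite (simpleS idealA) inE.
by rewrite inE => /existsP[u /existsP[v /eqP]]; exists u, v.
Qed.

Lemma exists_mulrK x y : exists w, mul (mul x y) w = x.
Proof.
have [u [v xE]] := exists_sandwich x.
have [d vd] := exists_rmul_perm_inv v.
have [d' yd'] := exists_rmul_perm_inv y.
have xs : mul x (mul d v) = x.
  by rewrite {2}xE -(rmul_perm1_mid (mul u x) v vd) !mulA -xE.
by exists (mul d' (mul d v)); rewrite mulA -(mulA x) rmul_perm1_mid.
Qed.

End MiddleUnit.

Definition to_codom (T U : finType) (f : T -> U) (x : T) : {y | y \in codom f} :=
  exist _ (f x) (codom_f f x).

Lemma to_codom_onto (T U : finType) (f : T -> U) (y : {y | y \in codom f}) :
  exists x, to_codom f x = y.
Proof. by case: y => y yf; case/codomP: (yf) => x yx; exists x; apply: val_inj. Qed.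

Lemma inj_onto_bij (T U : finType) (f : T -> U) :
  injective f -> (forall y, exists x, f x = y) -> bijective f.
Proof.
move=> f_inj f_onto; apply: (inj_card_bij f_inj).
rewrite -(card_codom f_inj); apply/subset_leq_card/subsetP => y _.
by have [x <-] := f_onto y; apply: codom_f.
Qed.

Section RectangularBand.

Variables (T : finType) (mul : T -> T -> T).
Hypothesis mulA : associative mul.
Hypothesis left_uniform : forall a b x y, mul a x = mul a y -> mul b x = mul b y.
Hypothesis right_uniform : forall a b x y, mul x a = mul y a -> mul x b = mul y b.
Variable e : T.
Hypothesis ee : mul e e = e.
Hypothesis simpleS : simple_semigroup mul.

(* Left-handed facts are the right-handed ones for the opposite product. *)
Let mulA_op : associative (fun x y => mul y x).
Proof. by move=> x y z; rewrite mulA. Qed.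

Let simple_op : simple_semigroup (fun x y => mul y x).
Proof. by move=> A [A0 idealA]; apply: simpleS; split=> // x y /(idealA x y) []. Qed.

Definition lclass x := [set mul s x | s : T].

Lemma lclass_mull x y : lclass (mul x y) = lclass y.
Proof. exact: (rclass_mulr mulA_op right_uniform left_uniform ee y x). Qed.

Lemma lclass_emul_eq x y :
  lclass x = lclass y -> mul (mul e x) e = mul (mul e y) e -> mul e x = mul e y.
Proof. by rewrite -!mulA; apply: (rclass_mule_eq mulA_op right_uniform). Qed.

Lemma exists_mullK x y : exists w, mul w (mul y x) = x.
Proof. exact: (exists_mulrK mulA_op right_uniform left_uniform ee simple_op). Qed.

Lemma mule_emul_inj x y : mul x e = mul y e -> mul e x = mul e y -> x = y.
Proof.
move=> /(right_uniform (a := e)) xb /(left_uniform (a := e)) ax.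
have [w xyw] := exists_mulrK mulA left_uniform right_uniform ee simpleS x y.
have [w' w'xy] := exists_mullK y x.
have xE : x = mul (mul y y) w by rewrite -mulA -xb mulA xyw.
have yE : y = mul (mul w' y) y by rewrite -(ax w') -mulA w'xy.
transitivity (mul (mul w' y) x); last by rewrite ax -yE.
by rewrite {2}xE !mulA -yE -xE.
Qed.

Local Notation psi := (rmul_perm mulA right_uniform ee).
Local Notation Psi := (rmul_group mulA right_uniform ee).

Definition rees_of x :=
  (to_codom (rclass mul) x, subg Psi (psi x), to_codom lclass x).

Lemma rees_ofM x y :
  rees_of (mul x y) = rees_mul (fun _ _ => 1%g) (rees_of x) (rees_of y).
Proof.
rewrite /rees_mul /rees_of /=; congr (_, _, _); apply: val_inj => /=.
- exact: (rclass_mulr mulA left_uniform right_uniform ee).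
- by rewrite mulg1 rmul_permM !subgK ?groupM ?rmul_perm_in.
- exact: lclass_mull.
Qed.

Lemma rees_of_inj : injective rees_of.
Proof.
move=> x y xy.
have xyR : rclass mul x = rclass mul y := congr1 (fun t => val t.1.1) xy.
have xyL : lclass x = lclass y := congr1 (fun t => val t.2) xy.
have psi_xy : psi x = psi y.
  by move/(congr1 (fun t => sgval t.1.2)): xy; rewrite /= !subgK ?rmul_perm_in.
have exe : mul (mul e x) e = mul (mul e y) e.
  by rewrite -!(rmul_perm_idem mulA right_uniform) psi_xy.
apply: mule_emul_inj; first exact: (rclass_mule_eq mulA left_uniform xyR exe).
exact: lclass_emul_eq.
Qed.

Lemma rees_of_onto t : exists x, rees_of x = t.
Proof.
case: t => [[l g] i].
have [a <-] := to_codom_onto l; have [b <-] := to_codom_onto i.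
have [c psi_c] : exists c, psi c = ((psi a)^-1 * sgval g * (psi b)^-1)%g.
  by apply: rmul_perm_onto; rewrite !groupM ?groupV ?subgP ?rmul_perm_in.
exists (mul (mul a c) b); rewrite !rees_ofM /=; congr (_, _, _).
apply: val_inj; rewrite /= !mulg1 !subgK ?rmul_perm_in // psi_c.
by rewrite !mulgA mulgV mul1g -mulgA mulVg mulg1.
Qed.

Lemma rectangular_band_of_groups_idem : rectangular_band_of_groups mul.
Proof.
exists (subg_of Psi), _, _, rees_of; split; last exact: rees_ofM.
exact: inj_onto_bij rees_of_inj rees_of_onto.
Qed.

End RectangularBand.

Lemma rectangular_band_of_groups_void (T : finType) (mul : T -> T -> T) :
  (T -> False) -> rectangular_band_of_groups mul.
Proof.
move=> noT; exists {perm T}, T, T, (fun x => (x, 1%g, x)).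
split=> [|x]; last by case: (noT x).
by exists (fun t => t.1.1) => [x | t]; [case: (noT x) | case: (noT t.1.1)].
Qed.

Theorem lemma2 (T : finType) (mul : T -> T -> T)
  (mulA : associative mul)
  (Hsimple : simple_semigroup mul)
  (Hleft : forall a b alpha beta : T,
      mul a alpha = mul a beta -> mul b alpha = mul b beta)
  (Hright : forall a b alpha beta : T,
      mul alpha a = mul beta a -> mul alpha b = mul beta b) :
  rectangular_band_of_groups mul.
Proof.
case: (pickP (@predT T)) => [x _ | noT]; last first.
  by apply: rectangular_band_of_groups_void => x; have := noT x.
have [e ee] := exists_idempotent mulA x.
exact: (rectangular_band_of_groups_idem mulA Hleft Hright ee Hsimple).
Qed.
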